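(* Let $A$ be an algebra of Engel type. Then $A$ can be embedded into a prime algebra of Engel type.
   Context: An algebra here is a finite-dimensional vector space $A$ over a field $\Bbbk$ of characteristic zero with finitely many symmetric multilinear operations $\Psi_\ell:A^\ell\to A$, $2\le\ell\le m$ (equivalently, via $x\mapsto x-\sum_\ell\Psi_\ell(x,\dots,x)$, a polynomial self-map of $A$). An ideal is a subspace $I$ with $\Psi_\ell(a_1,\dots,a_\ell)\in I$ whenever some $a_i\in I$. The algebra is prime if it has no nonzero ideals with zero product, where the product of ideals $I,J$ is the span of values of operations with one argument in $I$, one in $J$, and the rest arbitrary. An embedding is an injective linear map compatible with the operations. For $x\in A$ let $\mathrm{Ad}_{\ell-1}(x):y\mapsto\Psi_\ell(y,x,\dots,x)$ and $E_s(x)=\sum \ell_1\cdots\ell_q\,\mathrm{Ad}_{\ell_1-1}(x)\circ\cdots\circ\mathrm{Ad}_{\ell_q-1}(x)$ over all $q\ge1$, $2\le\ell_i\le m$, $\sum(\ell_i-1)=s$. $A$ is of Engel type if there is $s_0$ with $E_s(x)=0$ for all $x\in A$, $s\ge s_0$ (equivalently, the map $x\mapsto x-\sum_\ell\Psi_\ell(x,\dots,x)$ has Jacobian determinant $1$). *)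

From HB Require Import structures.
From mathcomp Require Import all_boot all_order all_algebra all_fingroup.
Set Implicit Arguments. Unset Strict Implicit. Unset Printing Implicit Defensive.
Import GRing.Theory.
Local Open Scope ring_scope.

(* An "algebra" on the finite-dimensional F-vector space V with operations of
   degrees 2..m is given by a family  Psi l : (V^l) -> V  (arguments as a
   finite function 'I_l -> V).  Psi l is required to be 0 for l < 2 or l > m
   (these operations do not exist). *)
Section Alg.
Variables (F : fieldType) (V : vectType F).
Definition ops := forall l : nat, {ffun 'I_l -> V} -> V.

Definition upd l (t : {ffun 'I_l -> V}) (i : 'I_l) (x : V) : {ffun 'I_l -> V} :=
  [ffun j => if j == i then x else t j].

Definition is_algebra (m : nat) (Psi : ops) : Prop :=
  [/\ (forall l t, (l < 2)%N \/ (m < l)%N -> Psi l t = 0),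
      (forall l (t : {ffun 'I_l -> V}) (i : 'I_l) (a : F) (x y : V),
          Psi l (upd t i (a *: x + y)) = a *: Psi l (upd t i x) + Psi l (upd t i y)) &
      (forall l (t : {ffun 'I_l -> V}) (s : 'S_l),
          Psi l [ffun j => t (s j)] = Psi l t)].

Definition is_ideal (Psi : ops) (I : {vspace V}) : Prop :=
  forall l (t : {ffun 'I_l -> V}) (i : 'I_l), t i \in I -> Psi l t \in I.

(* the product IJ (span of values of operations with one argument in I, another
   one in J, the rest arbitrary) is zero *)
Definition zero_product (Psi : ops) (I J : {vspace V}) : Prop :=
  forall l (t : {ffun 'I_l -> V}) (i j : 'I_l),
    i != j -> t i \in I -> t j \in J -> Psi l t = 0.

Definition prime_alg (Psi : ops) : Prop :=
  forall I J : {vspace V}, is_ideal Psi I -> is_ideal Psi J ->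
    zero_product Psi I J -> I = 0%VS \/ J = 0%VS.

(* Ad_{l-1}(x) : y |-> Psi_l(y, x, ..., x) *)
Definition Ad (Psi : ops) (l : nat) (x : V) (y : V) : V :=
  Psi l [ffun j : 'I_l => if val j == 0%N then y else x].

(* E_s(x) = sum over q >= 1, (l_1..l_q) with 2 <= l_i <= m and
   sum (l_i - 1) = s, of l_1...l_q Ad_{l_1-1}(x) o ... o Ad_{l_q-1}(x).
   (q <= s necessarily, since each l_i - 1 >= 1.) *)
Definition Eop (m : nat) (Psi : ops) (s : nat) (x : V) (y : V) : V :=
  \sum_(q < s.+1 | (0 < q)%N)
    \sum_(c : q.-tuple 'I_m.+1 |
            all (fun l : 'I_m.+1 => (2 <= l)%N) c &&
            (\sum_(l <- c) (val l).-1 == s)%N)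
      (\prod_(l <- c) (val l))%:R *:
        foldr (fun (l : 'I_m.+1) (g : V -> V) => fun z => Ad Psi l x (g z))
              id c y.

Definition engel_type (m : nat) (Psi : ops) : Prop :=
  exists s0 : nat, forall s : nat, (s0 <= s)%N -> forall x y : V, Eop m Psi s x y = 0.
End Alg.

Definition embedding (F : fieldType) (V W : vectType F)
    (Psi : ops V) (Phi : ops W) (f : V -> W) : Prop :=
  [/\ forall (a : F) (x y : V), f (a *: x + y) = a *: f x + f y,
      injective f &
      forall l (t : {ffun 'I_l -> V}), f (Psi l t) = Phi l [ffun j => f (t j)]].

From HB Require Import structures.
From mathcomp Require Import all_boot all_order all_algebra all_fingroup.
From mathcomp Require Import zify ring.
Unset Printing Implicit Defensive.
Import GRing.Theory.
Local Open Scope ring_scope.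

(* An algebra A = (V, Psi) is embedded into W = X + Y + F eW, where X = V + F^2,
   Y is a second copy of X and dotX : X * Y -> F is a nondegenerate pairing.
   On W, Psi acts on the copy of V; in addition there is the binary operation
   (u, w) |-> (dotX u_X w_Y + dotX w_X u_Y) eW and the ternary operation
   obtained by symmetrizing (u, v, w) |-> cp v * cp w * rotX u_X, where cp is
   the eW-coordinate and rotX : X -> Y is skew: dotX a (rotX a) = 0.
   Primeness: pairing a nonzero element of an ideal with a suitable partner puts
   eW in every nonzero ideal, while the ternary product of eW, eW and any u
   with rotX u_X <> 0 is nonzero.
   Engel type: along the recursion for E_s(x), the X-part is that of A, hence
   eventually 0; then, rotX being skew, the pairing of x with the Y-part
   vanishes; then the eW-coordinate, which only the binary operation produces;
   and finally the Y-part, which only the ternary operation produces. *)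

Lemma linear_sumZ (F : fieldType) (U Z : lmodType F) (f : U -> Z) : linear f ->
  forall (I : Type) (r : seq I) (P : pred I) (c : I -> F) (G : I -> U),
  f (\sum_(i <- r | P i) c i *: G i) = \sum_(i <- r | P i) c i *: f (G i).
Proof.
move=> fL I r P c G.
pose fl : {linear U -> Z} := HB.pack f (GRing.isLinear.Build F U Z *:%R f fL).
transitivity (\sum_(i <- r | P i) fl (c i *: G i)); first exact: (linear_sum fl).
by apply: eq_bigr => i _; exact: (linearZ_LR fl).
Qed.
Arguments linear_sumZ {F U Z f}.

Section EngelSeries.
Variables (F : fieldType) (V : vectType F) (m : nat) (Psi : ops V).
Hypothesis HA : is_algebra m Psi.

Lemma upd_id l (t : {ffun 'I_l -> V}) i : upd t i (t i) = t.
Proof. by apply/ffunP => j; rewrite ffunE; case: eqP => // ->. Qed.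

Lemma op_arg0 l (t : {ffun 'I_l -> V}) i : t i = 0 -> Psi l t = 0.
Proof.
case: HA => _ Psi_multilinear _ ti0.
have upd_t0 : upd t i 0 = t by rewrite -ti0 upd_id.
have := Psi_multilinear l t i 1 0 0; rewrite !scale1r addr0 upd_t0 => Psi_tt.
by apply: (addrI (Psi l t)); rewrite addr0 -Psi_tt.
Qed.

Variable x : V.

Lemma Ad_out_of_range l y : (l < 2)%N \/ (m < l)%N -> Ad Psi l x y = 0.
Proof. by case: HA => out_range_0 _ _; exact: out_range_0. Qed.

Lemma Ad_linear l : linear (Ad Psi l x).
Proof.
case: l => [|l] a y z; first by rewrite !Ad_out_of_range ?scaler0 ?addr0 //; left.
case: HA => _ Psi_multilinear _.
pose t : {ffun 'I_l.+1 -> V} := [ffun j => if val j == 0%N then 0 else x].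
have upd_t w : [ffun j : 'I_l.+1 => if val j == 0%N then w else x] = upd t ord0 w.
  by apply/ffunP => -[[|j] lt_jl]; rewrite !ffunE.
by rewrite /Ad !upd_t Psi_multilinear.
Qed.

Let AdL l : {linear V -> V} :=
  HB.pack (Ad Psi l x) (GRing.isLinear.Build F V V *:%R (Ad Psi l x) (Ad_linear l)).

Lemma AdZ l a y : Ad Psi l x (a *: y) = a *: Ad Psi l x y.
Proof. exact: (linearZ_LR (AdL l)). Qed.

Lemma Ad_sum l (I : Type) (r : seq I) (P : pred I) (G : I -> V) :
  Ad Psi l x (\sum_(i <- r | P i) G i) = \sum_(i <- r | P i) Ad Psi l x (G i).
Proof. exact: (linear_sum (AdL l)). Qed.

Definition Eterm (q s : nat) (y : V) : V :=
  \sum_(c : q.-tuple 'I_m.+1 |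
          all (fun l : 'I_m.+1 => (2 <= l)%N) c && (\sum_(l <- c) (val l).-1 == s)%N)
    (\prod_(l <- c) val l)%:R *:
      foldr (fun (l : 'I_m.+1) (g : V -> V) => fun z => Ad Psi l x (g z)) id c y.

(* [Etot] is [Eop] completed by the term [q = 0], so that [Etot 0 = id]. *)
Definition Etot (s : nat) (y : V) : V := \sum_(q < s.+1) Eterm q s y.

Lemma Eterm0 s y : Eterm 0 s y = if s == 0%N then y else 0.
Proof.
rewrite /Eterm big_mkcond (big_pred1 [tuple]) => [|c]; last by rewrite (tuple0 c) inE.
by rewrite /= !big_nil eq_sym scale1r.
Qed.

Lemma Etot0 y : Etot 0 y = y.
Proof. by rewrite /Etot big_ord1 Eterm0. Qed.

Lemma Eop_Etot s y : (0 < s)%N -> Eop m Psi s x y = Etot s y.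
Proof.
move=> s_gt0; rewrite /Eop /Etot big_mkcond !big_ord_recl /= Eterm0.
by rewrite -[s == 0%N]negbK -lt0n s_gt0 add0r.
Qed.

Lemma size_le_sum_pred (c : seq 'I_m.+1) :
  all (fun l : 'I_m.+1 => (2 <= l)%N) c -> (size c <= \sum_(l <- c) (val l).-1)%N.
Proof.
move/allP=> c_ge2; rewrite -sum1_size big_seq [leqRHS]big_seq.
by apply: leq_sum => -[[|[|l]] ?] /c_ge2.
Qed.

Lemma Eterm_gt q s y : (s < q)%N -> Eterm q s y = 0.
Proof.
move=> lt_sq; apply: big1 => c /andP[/size_le_sum_pred le_cs /eqP sum_s].
by move: le_cs; rewrite sum_s size_tuple leqNgt lt_sq.
Qed.

Lemma big_tuple_cons (Z : nmodType) n (G : n.+1.-tuple 'I_m.+1 -> Z) :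
  \sum_(c : n.+1.-tuple 'I_m.+1) G c =
  \sum_(a : 'I_m.+1) \sum_(c : n.-tuple 'I_m.+1) G [tuple of a :: c].
Proof.
rewrite pair_big /= (reindex (fun p : _ * n.-tuple _ => [tuple of p.1 :: p.2])) //.
exists (fun c : n.+1.-tuple 'I_m.+1 => (thead c, [tuple of behead c])).
  by case=> a c _; congr (_, _); apply: val_inj.
by move=> c _; rewrite [in RHS](tuple_eta c).
Qed.

Lemma Eterm_cons q s y :
  Eterm q.+1 s y = \sum_(a : 'I_m.+1 | (2 <= a)%N && (a.-1 <= s)%N)
                     (val a)%:R *: Ad Psi a x (Eterm q (s - (val a).-1) y).
Proof.
rewrite /Eterm big_mkcond big_tuple_cons [RHS]big_mkcond; apply: eq_bigr => a _ /=.
case: (boolP (2 <= a)%N) => //= a_ge2; last by apply: big1.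
rewrite Ad_sum // scaler_sumr.
have [le_as|lt_sa] := leqP a.-1 s; last first.
  apply: big1 => c; rewrite big_cons; case: ifP => // /andP[_ /eqP sum_s].
  by move: lt_sa; rewrite -sum_s ltnNge leq_addr.
rewrite [RHS]big_mkcond; apply: eq_bigr => c _.
by rewrite !big_cons -(eqn_add2l a.-1 _ (s - a.-1)) subnKC // natrM -scalerA AdZ.
Qed.

Lemma Etot_widen n s y : (s < n)%N -> \sum_(q < n) Eterm q s y = Etot s y.
Proof.
move=> lt_sn; rewrite /Etot (big_ord_widen_cond n xpredT (fun q => Eterm q s y) lt_sn).
by rewrite [RHS]big_mkcond; apply: eq_bigr => q _ /=; case: ltnP => // /Eterm_gt->.
Qed.

Lemma Etot_rec s y : (0 < s)%N ->
  Etot s y = \sum_(a < s.+2 | (2 <= a)%N) a%:R *: Ad Psi a x (Etot (s - a.-1) y).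
Proof.
move=> s_gt0; set G := fun a : nat => a%:R *: Ad Psi a x (Etot (s - a.-1) y).
rewrite /Etot big_ord_recl Eterm0 gtn_eqF // add0r.
under eq_bigr do rewrite Eterm_cons.
rewrite exchange_big /=.
have -> : \sum_(a < m.+1 | (2 <= a)%N && (a.-1 <= s)%N) \sum_(q < s)
    a%:R *: Ad Psi a x (Eterm q (s - a.-1) y) =
    \sum_(a < m.+1 | (2 <= a)%N && (a.-1 <= s)%N) G a.
  apply: eq_bigr => a /andP[a_ge2 _]; rewrite -scaler_sumr -Ad_sum // Etot_widen //.
  by move: a_ge2 s_gt0; case: (val a) => // a'; lia.
pose Pm a := (2 <= a)%N && (a.-1 <= s)%N.
rewrite (big_ord_widen_cond (m.+1 + s.+2) Pm G (leq_addr _ _)).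
rewrite (big_ord_widen_cond (m.+1 + s.+2) (leq 2) G (leq_addl _ _)).
rewrite big_mkcond [RHS]big_mkcond; apply: eq_bigr => a _.
rewrite /Pm; case: (boolP (2 <= a)%N) => //= a_ge2.
have -> : (a.-1 <= s)%N = (a < s.+2)%N by rewrite -(ltn_predK a_ge2).
case: (a < s.+2)%N => //=; case: ltnP => // lt_ma.
by rewrite /G Ad_out_of_range ?scaler0 //; right.
Qed.

End EngelSeries.

Arguments op_arg0 {F V m Psi} HA {l} t i.
Arguments Etot {F V} m Psi x s y.
Arguments Etot0 {F V m Psi x}.
Arguments Eop_Etot {F V m Psi x s y}.
Arguments Etot_rec {F V m Psi} HA x {s} y.

Section SymmetrizedProduct.
Variables (F : fieldType) (U : vectType F) (Z : lmodType F).
Variables (h : U -> F) (B : U -> U -> Z).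

Definition symop l (t : {ffun 'I_l -> U}) : Z :=
  \sum_(i < l) \sum_(j < l | j != i)
     (\prod_(k < l | (k != i) && (k != j)) h (t k)) *: B (t i) (t j).

Lemma symop_perm l (t : {ffun 'I_l -> U}) (s : 'S_l) :
  symop l [ffun j => t (s j)] = symop l t.
Proof.
rewrite /symop [RHS](reindex_inj (@perm_inj _ s)); apply: eq_bigr => i _.
rewrite [RHS](reindex_inj (@perm_inj _ s)) /=.
apply: eq_big => [j|j _]; first by rewrite (inj_eq (@perm_inj _ s)).
rewrite !ffunE; congr (_ *: _); rewrite [RHS](reindex_inj (@perm_inj _ s)) /=.
by apply: eq_big => [k|k _]; rewrite ?ffunE // !(inj_eq (@perm_inj _ s)).
Qed.

Lemma symop_eq0 l (t : {ffun 'I_l -> U}) :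
  (forall i j, i != j -> B (t i) (t j) = 0) -> symop l t = 0.
Proof.
move=> Bt0; apply: big1 => i _; apply: big1 => j ji.
by rewrite Bt0 ?scaler0 // eq_sym.
Qed.

Lemma symop2 a b : symop 2%N [ffun j : 'I_2 => nth 0 [:: a; b] j] = B a b + B b a.
Proof.
rewrite /symop; do 5!rewrite !big_mkcond !big_ord_recl !big_ord0 /=.
by rewrite !ffunE /= !mulr1 !scale1r !add0r !addr0.
Qed.

Lemma symop3 a b c : symop 3%N [ffun j : 'I_3 => nth 0 [:: a; b; c] j] =
  h c *: (B a b + B b a) + h b *: (B a c + B c a) + h a *: (B b c + B c b).
Proof.
rewrite /symop; do 10!rewrite !big_mkcond !big_ord_recl !big_ord0 /=.
rewrite !ffunE /= !mulr1 !mul1r !add0r !addr0 !scalerDr.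
by rewrite !addrA (addrAC (h c *: B a b)) (addrAC _ (h a *: B b c) (h b *: B c a)).
Qed.

Hypothesis h_scalar : scalar h.
Hypothesis B_linearl : forall a u v w, B (a *: u + v) w = a *: B u w + B v w.
Hypothesis B_linearr : forall a u v w, B w (a *: u + v) = a *: B w u + B w v.

Lemma symop_multilinear l (t : {ffun 'I_l -> U}) (k : 'I_l) (a : F) (u v : U) :
  symop l (upd t k (a *: u + v)) = a *: symop l (upd t k u) + symop l (upd t k v).
Proof.
rewrite /symop scaler_sumr -big_split; apply: eq_bigr => i _ /=.
rewrite scaler_sumr -big_split; apply: eq_bigr => j ji /=.
have updE z k' : upd t k z k' = if k' == k then z else t k' by rewrite ffunE.
have prod_upd z (P : pred 'I_l) : ~~ P k ->
    \prod_(k' < l | P k') h (upd t k z k') = \prod_(k' < l | P k') h (t k').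
  by move=> kP; apply: eq_bigr => k' Pk'; rewrite updE; case: eqP => // Ek; rewrite -Ek Pk' in kP.
have [Eki|ki] := eqVneq k i.
  rewrite -Eki in ji *.
  rewrite !prod_upd ?eqxx // !updE eqxx (negbTE ji).
  by rewrite B_linearl scalerDr !scalerA mulrC.
have [Ekj|kj] := eqVneq k j.
  rewrite -Ekj in ji *.
  rewrite !prod_upd ?eqxx ?andbF // !updE eqxx eq_sym (negbTE ji).
  by rewrite B_linearr scalerDr !scalerA mulrC.
have kij : (k != i) && (k != j) by rewrite ki kj.
rewrite !updE !(eq_sym i) !(eq_sym j) (negbTE ki) (negbTE kj) !(bigD1 k kij) /= !updE eqxx.
by rewrite !prod_upd ?eqxx ?andbF // h_scalar mulrDl scalerDl !scalerA mulrA.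
Qed.
End SymmetrizedProduct.

Arguments symop {F U Z}.
Arguments symop_multilinear {F U Z h B}.

Lemma linear_symop (F : fieldType) (U : vectType F) (Z Z' : lmodType F) (h : U -> F)
    (B : U -> U -> Z) (pi : {linear Z -> Z'}) l (t : {ffun 'I_l -> U}) :
  pi (symop h B l t) = symop h (fun u v => pi (B u v)) l t.
Proof.
rewrite /symop linear_sum; apply: eq_bigr => i _.
by rewrite linear_sum; apply: eq_bigr => j _; rewrite linearZ.
Qed.

Arguments linear_symop {F U Z Z' h B} pi {l} t.

Section Extension.
Variables (F : fieldType) (V : vectType F).

Definition dotv (u v : V) : F^o :=
  \sum_i coord (vbasis (fullv : {vspace V})) i u * coord (vbasis fullv) i v.

Lemma dotvC u v : dotv u v = dotv v u.
Proof. by apply: eq_bigr => i _; rewrite mulrC. Qed.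

Lemma dotv_linear u : linear (dotv u).
Proof.
move=> a v w; rewrite /dotv scaler_sumr -big_split; apply: eq_bigr => i _ /=.
by rewrite linearP mulrDr mulrCA.
Qed.
HB.instance Definition _ u := GRing.isLinear.Build F V F^o *:%R (dotv u) (dotv_linear u).

Lemma dotv_nondeg u : u != 0 -> exists v, dotv u v != 0.
Proof.
move=> u_neq0; set e := vbasis (fullv : {vspace V}).
have free_e : free e := basis_free (vbasisP fullv).
have [/existsP[i ui_neq0] | /existsPn coord_u0] := boolP [exists i, coord e i u != 0].
  exists e`_i; rewrite /dotv (bigD1 i) //= coord_free // eqxx mulr1 big1 ?addr0 //.
  by move=> j ji; rewrite coord_free // eq_sym (negbTE ji) mulr0.
case/negP: u_neq0; rewrite (coord_vbasis (memvf u)) big1 // => i _.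
by move/negbNE/eqP: (coord_u0 i) => ->; rewrite scale0r.
Qed.

Local Notation X := (V * (F^o * F^o))%type.

Definition dotX (a b : X) : F^o := dotv a.1 b.1 + a.2.1 * b.2.1 + a.2.2 * b.2.2.

Lemma dotXC a b : dotX a b = dotX b a.
Proof. by rewrite /dotX dotvC (mulrC a.2.1) (mulrC a.2.2). Qed.

Lemma dotX_linear a : linear (dotX a).
Proof. by move=> c b b'; rewrite /dotX /= dotv_linear /GRing.scale /=; ring. Qed.
HB.instance Definition _ a := GRing.isLinear.Build F X F^o *:%R (dotX a) (dotX_linear a).

Lemma dotX0l b : dotX 0 b = 0.
Proof. by rewrite dotXC linear0. Qed.

Lemma dotX_nondeg a : a != 0 -> exists b, dotX a b != 0.
Proof.
case: a => v [s t] /=; have [-> | v_neq0] := eqVneq v 0; last first.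
  have [v' dot_v'] := dotv_nondeg _ v_neq0.
  by exists (v', 0); rewrite /dotX /= !mulr0 !addr0.
have [-> | s_neq0] := eqVneq s 0; last first.
  by exists (0, (1, 0)); rewrite /dotX /= linear0 mulr1 mulr0 add0r addr0.
move=> t_neq0; exists (0, (0, 1)); rewrite /dotX /= linear0 mulr1 mulr0 !add0r.
by apply: contraNneq t_neq0 => ->.
Qed.

Definition rotX (a : X) : X := (0, (a.2.2, - a.2.1)).

Lemma rotX_linear : linear rotX.
Proof.
by move=> c a b; congr (_, (_, _)); rewrite /= ?scaler0 ?addr0 // opprD scalerN.
Qed.
HB.instance Definition _ := GRing.isLinear.Build F X X *:%R rotX rotX_linear.

Lemma dotX_rotX a : dotX a (rotX a) = 0.
Proof. by rewrite /dotX /= linear0 add0r mulrN mulrC addrN. Qed.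

Lemma rotX_eq0 a : a.2 = 0 -> rotX a = 0.
Proof. by case: a => v [s t] /= [-> ->]; rewrite /rotX oppr0. Qed.

Definition W := (X * (X * F^o))%type.

Definition xp (w : W) : X := w.1.
Definition yp (w : W) : X := w.2.1.
Definition cp (w : W) : F^o := w.2.2.
Definition vp (w : W) : V := (xp w).1.
Definition sp (w : W) : F^o * F^o := (xp w).2.

Fact xp_linear : linear xp. Proof. by []. Qed.
Fact yp_linear : linear yp. Proof. by []. Qed.
Fact cp_linear : linear cp. Proof. by []. Qed.
Fact vp_linear : linear vp. Proof. by []. Qed.
Fact sp_linear : linear sp. Proof. by []. Qed.
HB.instance Definition _ := GRing.isLinear.Build F W X *:%R xp xp_linear.
HB.instance Definition _ := GRing.isLinear.Build F W X *:%R yp yp_linear.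
HB.instance Definition _ := GRing.isLinear.Build F W F^o *:%R cp cp_linear.

Lemma W_eq u w : xp u = xp w -> yp u = yp w -> cp u = cp w -> u = w.
Proof. by case: u w => [a [b c]] [a' [b' c']]; rewrite /xp /yp /cp /= => -> -> ->. Qed.

Definition embV (v : V) : W := ((v, 0), 0).
Definition embY (b : X) : W := (0, (b, 0)).
Definition eW : W := (0, (0, 1)).

Lemma xp_eW : xp eW = 0. Proof. by []. Qed.
Lemma cp_eW : cp eW = 1. Proof. by []. Qed.

Lemma embV_linear : linear embV.
Proof. by move=> c u v; congr ((_, _), _); rewrite /= ?scaler0 ?addr0. Qed.
HB.instance Definition _ := GRing.isLinear.Build F V W *:%R embV embV_linear.

Lemma embY_linear : linear embY.
Proof. by move=> c a b; congr (_, (_, _)); rewrite /= ?scaler0 ?addr0. Qed.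
HB.instance Definition _ := GRing.isLinear.Build F X W *:%R embY embY_linear.

Definition Bdot (u w : W) : W := dotX (xp u) (yp w) *: eW.
Definition Brot (u w : W) : W := cp w *: embY (rotX (xp u)).

Lemma xp_Bdot u w : xp (Bdot u w) = 0. Proof. by rewrite linearZ /= scaler0. Qed.
Lemma yp_Bdot u w : yp (Bdot u w) = 0. Proof. by rewrite linearZ /= scaler0. Qed.
Lemma cp_Bdot u w : cp (Bdot u w) = dotX (xp u) (yp w).
Proof. by rewrite linearZ /= /GRing.scale /= mulr1. Qed.
Lemma xp_Brot u w : xp (Brot u w) = 0. Proof. by rewrite linearZ /= scaler0. Qed.
Lemma yp_Brot u w : yp (Brot u w) = cp w *: rotX (xp u). Proof. by rewrite linearZ. Qed.
Lemma cp_Brot u w : cp (Brot u w) = 0. Proof. by rewrite linearZ /= /GRing.scale /= mulr0. Qed.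

Definition ext_op (Psi : ops V) : ops W := fun l t =>
  embV (Psi l [ffun j => vp (t j)])
  + (l == 3)%:R *: symop cp Brot l t + (l == 2)%:R *: symop cp Bdot l t.

Section Components.
Variables (Psi : ops V) (l : nat) (t : {ffun 'I_l -> W}).

Lemma xp_ext_op : xp (ext_op Psi l t) = (Psi l [ffun j => vp (t j)], 0).
Proof.
rewrite /ext_op !linearD !linearZ /= !(linear_symop xp).
by rewrite !symop_eq0 ?scaler0 ?addr0 // => i j _; [exact: xp_Bdot | exact: xp_Brot].
Qed.

Lemma yp_ext_op : yp (ext_op Psi l t) = (l == 3)%:R *: symop cp (fun u w => yp (Brot u w)) l t.
Proof.
rewrite /ext_op !linearD !linearZ /= !(linear_symop yp).
by rewrite [X in _ + (l == 2)%:R *: X]symop_eq0 ?scaler0 ?addr0 ?add0r // => i j _; exact: yp_Bdot.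
Qed.

Lemma cp_ext_op : cp (ext_op Psi l t) = (l == 2)%:R * symop cp (fun u w => cp (Bdot u w)) l t.
Proof.
rewrite /ext_op !linearD !linearZ /= !(linear_symop cp).
by rewrite [X in _ + (l == 3)%:R *: X]symop_eq0 ?scaler0 ?addr0 ?add0r // => i j _; exact: cp_Brot.
Qed.

End Components.

Fact cp_scalar : scalar cp. Proof. by []. Qed.

Lemma Bdot_linearl a u v w : Bdot (a *: u + v) w = a *: Bdot u w + Bdot v w.
Proof. by rewrite /Bdot linearP /= dotXC linearP /= scalerDl scalerA !(dotXC (yp w)). Qed.

Lemma Bdot_linearr a u v w : Bdot w (a *: u + v) = a *: Bdot w u + Bdot w v.
Proof. by rewrite /Bdot !linearP /= scalerDl scalerA. Qed.

Lemma Brot_linearl a u v w : Brot (a *: u + v) w = a *: Brot u w + Brot v w.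
Proof. by rewrite /Brot !linearP. Qed.

Lemma Brot_linearr a u v w : Brot w (a *: u + v) = a *: Brot w u + Brot w v.
Proof. by rewrite /Brot cp_scalar scalerDl scalerA. Qed.

Lemma lincomb3 (Z : lmodType F) (a c d : F) (e e' b b' g g' : Z) :
  (a *: e + e') + c *: (a *: b + b') + d *: (a *: g + g') =
  a *: (e + c *: b + d *: g) + (e' + c *: b' + d *: g').
Proof.
rewrite !scalerDr !scalerA (mulrC c) (mulrC d) -!scalerA.
by rewrite (addrACA (a *: e)) (addrACA (a *: e + _)).
Qed.

Variables (m : nat) (Psi : ops V).
Hypothesis HA : is_algebra m Psi.

Lemma ext_op_algebra : is_algebra m.+3 (ext_op Psi).
Proof.
case: HA => out_range_0 Psi_multilinear Psi_sym; split.
- move=> l t l_out; rewrite /ext_op out_range_0; last first.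
    by case: l_out => ?; [left | right; lia].
  have [-> -> /=] : (l == 3)%N = false /\ (l == 2)%N = false by case: l_out; lia.
  by rewrite linear0 !scale0r !addr0.
- move=> l t i a u v; rewrite /ext_op.
  have upd1 z : [ffun j => vp (upd t i z j)] = upd [ffun j => vp (t j)] i (vp z).
    by apply/ffunP => j; rewrite !ffunE; case: eqP.
  rewrite !upd1 vp_linear Psi_multilinear linearP.
  rewrite !(symop_multilinear cp_scalar Brot_linearl Brot_linearr).
  rewrite !(symop_multilinear cp_scalar Bdot_linearl Bdot_linearr).
  exact: lincomb3.
- move=> l t s; rewrite /ext_op !symop_perm; congr (embV _ + _ + _).
  by rewrite -[RHS](Psi_sym _ _ s); congr (Psi l _); apply/ffunP => j; rewrite !ffunE.
Qed.

Lemma ext_op_embedding : embedding Psi (ext_op Psi) embV.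
Proof.
split; first exact: embV_linear.
  by move=> u v [].
move=> l t; rewrite /ext_op !symop_eq0 ?scaler0 ?addr0.
- by congr (embV (Psi l _)); apply/ffunP => j; rewrite !ffunE.
- by move=> i j _; rewrite /Bdot !ffunE /= linear0 scale0r.
- by move=> i j _; rewrite /Brot !ffunE scale0r.
Qed.

Lemma ext_op_pair w u : vp w = 0 \/ vp u = 0 ->
  ext_op Psi 2%N [ffun j : 'I_2 => nth 0 [:: w; u] j] =
  (dotX (xp w) (yp u) + dotX (xp u) (yp w)) *: eW.
Proof.
move=> no_V; rewrite /ext_op /= scale0r scale1r addr0 symop2 -scalerDl.
set t := [ffun j => _]; have -> : Psi 2%N t = 0.
  by case: no_V => no_V; [apply: (op_arg0 HA t ord0) | apply: (op_arg0 HA t ord_max)];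
    rewrite !ffunE.
by rewrite linear0 add0r.
Qed.

Lemma ideal_eW (I : {vspace W}) : is_ideal (ext_op Psi) I -> I != 0%VS -> eW \in I.
Proof.
move=> idealI I_neq0; set w := vpick I.
have wI : w \in I := memv_pick I.
have w_neq0 : w != 0 by rewrite vpick0.
have eW_scaled c : c != 0 -> c *: eW \in I -> eW \in I.
  by move=> c_neq0 /(memvZ c^-1); rewrite scalerA mulVf // scale1r.
have pair_in u : ext_op Psi 2%N [ffun j : 'I_2 => nth 0 [:: w; u] j] \in I.
  by apply: (idealI _ _ ord0); rewrite ffunE.
have [xw0 | xw_neq0] := eqVneq (xp w) 0; last first.
  have [b dot_b] := dotX_nondeg _ xw_neq0.
  apply: (eW_scaled (dotX (xp w) b)) => //.
  by have := pair_in (embY b); rewrite ext_op_pair ?dotX0l ?addr0 //; right.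
have [yw0 | yw_neq0] := eqVneq (yp w) 0; last first.
  have [b dot_b] := dotX_nondeg _ yw_neq0.
  apply: (eW_scaled (dotX (yp w) b)) => //.
  have := pair_in ((b, 0) : W); rewrite ext_op_pair; last by left; rewrite /vp xw0.
  by rewrite xw0 dotX0l add0r dotXC.
have w_eW : w = cp w *: eW.
  by apply: W_eq; rewrite linearZ /= ?xw0 ?yw0 ?scaler0 // /GRing.scale /= mulr1.
apply: (eW_scaled (cp w)); last by rewrite -w_eW.
by apply: contraNneq w_neq0 => c0; rewrite w_eW c0 scale0r.
Qed.

Lemma yp_ext_op3 u :
  yp (ext_op Psi 3%N [ffun j : 'I_3 => nth 0 [:: eW; u; eW] j]) = 2%:R *: rotX (xp u).
Proof.
rewrite yp_ext_op scale1r symop3 !yp_Brot xp_eW linear0 cp_eW !scaler0 !add0r !addr0.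
by rewrite scaler0 addr0 !scale1r scaler_nat mulr2n.
Qed.

Lemma ext_op_prime : [pchar F] =i pred0 -> prime_alg (ext_op Psi).
Proof.
move=> charF0 I J idealI idealJ IJ0.
have [-> | I_neq0] := eqVneq I 0%VS; first by left.
have [-> | J_neq0] := eqVneq J 0%VS; first by right.
pose u : W := ((0, (1, 0)), 0).
have := IJ0 3%N [ffun j : 'I_3 => nth 0 [:: eW; u; eW] j] ord0 ord_max isT.
rewrite !ffunE /= => /(_ (ideal_eW _ idealI I_neq0) (ideal_eW _ idealJ J_neq0)).
move=> /(congr1 yp); rewrite yp_ext_op3 linear0 => /(congr1 (fun b : X => b.2.2)) /=.
by rewrite scaler_nat mulNrn => /eqP; rewrite oppr_eq0; move/pcharf0P: charF0 => ->.
Qed.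

Section EngelExtension.
Variable x : W.

Local Notation EW := (Etot m.+3 (ext_op Psi) x).
Local Notation EV := (Etot m Psi (vp x)).

Lemma Ad_args2 w :
  [ffun j : 'I_2 => if val j == 0%N then w else x] = [ffun j : 'I_2 => nth 0 [:: w; x] j].
Proof. by apply/ffunP => -[[|[|k]] lt_k2]; rewrite !ffunE. Qed.

Lemma Ad_args3 w :
  [ffun j : 'I_3 => if val j == 0%N then w else x] = [ffun j : 'I_3 => nth 0 [:: w; x; x] j].
Proof. by apply/ffunP => -[[|[|[|k]]] lt_k3]; rewrite !ffunE. Qed.

Lemma vp_Ad a w : vp (Ad (ext_op Psi) a x w) = Ad Psi a (vp x) (vp w).
Proof.
rewrite /vp /Ad xp_ext_op /=; congr (Psi a _).
by apply/ffunP => j; rewrite !ffunE; case: ifP.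
Qed.

Lemma sp_Ad a w : sp (Ad (ext_op Psi) a x w) = 0.
Proof. by rewrite /sp /Ad xp_ext_op. Qed.

Lemma yp_Ad a w : a != 3%N -> yp (Ad (ext_op Psi) a x w) = 0.
Proof. by move=> /negbTE a_neq3; rewrite /Ad yp_ext_op a_neq3 scale0r. Qed.

Lemma cp_Ad a w : a != 2%N -> cp (Ad (ext_op Psi) a x w) = 0.
Proof. by move=> /negbTE a_neq2; rewrite /Ad cp_ext_op a_neq2 mul0r. Qed.

Lemma yp_Ad3 w : sp w = 0 -> cp w = 0 -> yp (Ad (ext_op Psi) 3%N x w) = 0.
Proof.
move=> sw0 cw0; rewrite /Ad yp_ext_op Ad_args3 scale1r symop3 !yp_Brot rotX_eq0 // cw0.
by rewrite !scale0r !(scaler0, addr0).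
Qed.

Lemma dot_Ad3 w : sp w = 0 -> dotX (xp x) (yp (Ad (ext_op Psi) 3%N x w)) = 0.
Proof.
move=> sw0; rewrite /Ad yp_ext_op Ad_args3 scale1r symop3 !yp_Brot rotX_eq0 //.
by rewrite !linearD !linearZ /= linear0 dotX_rotX !scaler0 !addr0.
Qed.

Lemma cp_Ad2 w : xp w = 0 -> dotX (xp x) (yp w) = 0 -> cp (Ad (ext_op Psi) 2%N x w) = 0.
Proof.
move=> xw0 dot_w; rewrite /Ad cp_ext_op Ad_args2 mul1r symop2 !cp_Bdot xw0 dotX0l add0r.
exact: dot_w.
Qed.

Lemma vp_Etot s w : vp (EW s w) = EV s (vp w).
Proof.
elim/ltn_ind: s w => s IH w; have [-> | s_gt0] := posnP s; first by rewrite !Etot0.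
rewrite (Etot_rec ext_op_algebra) // (Etot_rec HA) // (linear_sumZ vp_linear).
apply: eq_bigr => a a_ge2; rewrite vp_Ad IH //.
by move: a_ge2 s_gt0; case: (val a) => // -[] //=; lia.
Qed.

Lemma sp_Etot s w : (0 < s)%N -> sp (EW s w) = 0.
Proof.
move=> s_gt0; rewrite (Etot_rec ext_op_algebra) // (linear_sumZ sp_linear).
by apply: big1 => a _; rewrite sp_Ad scaler0.
Qed.

Fact dot_yp_linear : linear (fun w : W => dotX (xp x) (yp w)).
Proof. by move=> a u v; rewrite !linearP. Qed.

Lemma dot_Etot s w : (3 <= s)%N -> dotX (xp x) (yp (EW s w)) = 0.
Proof.
move=> s_ge3; rewrite (Etot_rec ext_op_algebra) ?(leq_trans _ s_ge3) //.
rewrite (linear_sumZ dot_yp_linear); apply: big1 => a _.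
have [a3 | a_neq3] := eqVneq (val a) 3%N; last by rewrite yp_Ad // linear0 scaler0.
by rewrite a3 dot_Ad3 ?scaler0 // sp_Etot //; lia.
Qed.

Variable K : nat.
Hypothesis K_gt0 : (0 < K)%N.
Hypothesis EV0 : forall s v, (K <= s)%N -> EV s v = 0.

Lemma xp_Etot0 s w : (K <= s)%N -> xp (EW s w) = 0.
Proof.
move=> le_Ks; have -> : xp (EW s w) = (vp (EW s w), sp (EW s w)) by rewrite /vp /sp; case: (xp _).
by rewrite vp_Etot EV0 // sp_Etot //; lia.
Qed.

Lemma cp_Etot s w : (K + 3 <= s)%N -> cp (EW s w) = 0.
Proof.
move=> le_s; rewrite (Etot_rec ext_op_algebra); last lia.
rewrite (linear_sumZ cp_linear); apply: big1 => a _.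
have [a2 | a_neq2] := eqVneq (val a) 2%N; last by rewrite cp_Ad // scaler0.
by rewrite a2 cp_Ad2 ?scaler0 //; [apply: xp_Etot0 | apply: dot_Etot]; lia.
Qed.

Lemma yp_Etot s w : (K + 5 <= s)%N -> yp (EW s w) = 0.
Proof.
move=> le_s; rewrite (Etot_rec ext_op_algebra); last lia.
rewrite (linear_sumZ yp_linear); apply: big1 => a _.
have [a3 | a_neq3] := eqVneq (val a) 3%N; last by rewrite yp_Ad // scaler0.
by rewrite a3 yp_Ad3 ?scaler0 //; [apply: sp_Etot | apply: cp_Etot]; lia.
Qed.

Lemma Etot_eq0 s w : (K + 5 <= s)%N -> EW s w = 0.
Proof. by move=> le_s; apply: W_eq; rewrite ?xp_Etot0 ?yp_Etot ?cp_Etot //; lia. Qed.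

End EngelExtension.

Lemma ext_op_engel : engel_type m Psi -> engel_type m.+3 (ext_op Psi).
Proof.
case=> s0 Eop0; exists (s0.+1 + 5)%N => s le_s x y.
rewrite Eop_Etot; last lia.
apply: (Etot_eq0 x s0.+1) => // s' v le_s'.
by rewrite -Eop_Etot ?Eop0 //; lia.
Qed.

End Extension.

Arguments ext_op {F V}.
Arguments embV {F V}.
Arguments ext_op_algebra {F V m Psi}.
Arguments ext_op_prime {F V m Psi}.
Arguments ext_op_engel {F V m Psi}.
Arguments ext_op_embedding {F V}.

Theorem mainTheorem6 (F : fieldType) (charF0 : [pchar F]%R =i pred0)
  (V : vectType F) (m : nat) (Psi : ops V) :
  is_algebra m Psi -> engel_type m Psi ->
  exists (W : vectType F) (m' : nat) (Phi : ops W) (f : V -> W),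
    [/\ is_algebra m' Phi, prime_alg Phi, engel_type m' Phi & embedding Psi Phi f].
Proof.
move=> HA HE; exists (W F V), m.+3, (ext_op Psi), embV.
split; first exact: ext_op_algebra HA.
- exact: ext_op_prime HA charF0.
- exact: ext_op_engel HA HE.
- exact: ext_op_embedding.
Qed.
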